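(* For all $n\ge1$ and $k\ge0$, the map sending a word $x_n\cdots x_1\in L_{\mathrm{Rect}}$ to $\psi_{x_n}\circ\cdots\circ\psi_{x_1}(e_0)$ restricts to a bijection from the set of words in $L_{\mathrm{Rect}}$ of length $n$ containing exactly $k$ occurrences of the letter $d$ onto the set of rectangular permutations in $S_n$ with exactly $k$ recoils.
   Context: A permutation is rectangular if it avoids $2413,2431,4213,4231$; a recoil of $\pi\in S_n$ is $i\in\{1,\dots,n-1\}$ with $\pi^{-1}_i>\pi^{-1}_{i+1}$; $e_0$ is the empty permutation. For $\pi\in S_n$ (one-line form) and $1\le i,j\le n+1$, $\rho_{i,j}(\pi)\in S_{n+1}$ is obtained by increasing by $1$ every entry $\ge i$ and inserting the value $i$ at position $j$. Operators: $\psi_1=\rho_{1,1}$, domain all rectangular permutations (including $e_0$); $\psi_2=\rho_{1,2}$, domain rectangular $\pi$ of size $\ge1$ with $\pi_1\ne1$; $\psi_u(\pi)=\rho_{\pi_1,1}(\pi)$, same domain as $\psi_2$; $\psi_d(\pi)=\rho_{\pi_1+1,1}(\pi)$, domain rectangular $\pi$ of size $\ge1$. A word $x_m\cdots x_1$ over $\{1,2,u,d\}$ stands for $\psi_{x_m}\circ\cdots\circ\psi_{x_1}$ (rightmost applied first); $L_{\mathrm{Rect}}$ is the set of words of length $m\ge1$ for which this composition applied to $e_0$ is defined (each operator applied within its domain). *)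

(* Permutations of size n are one-line sequences of nat
   (values 1..n); the empty permutation e_0 is [::]. *)
From mathcomp Require Import all_boot.
Set Implicit Arguments. Unset Strict Implicit. Unset Printing Implicit Defensive.

Fixpoint subseqs (s : seq nat) : seq (seq nat) :=
  match s with
  | [::] => [:: [::]]
  | x :: s' => let r := subseqs s' in map (cons x) r ++ r
  end.

Definition order_iso (s q : seq nat) : bool :=
  (size s == size q) &&
  all (fun i => all (fun j => (nth 0 s i < nth 0 s j) == (nth 0 q i < nth 0 q j))
                    (iota 0 (size q))) (iota 0 (size q)).

Definition contains (p q : seq nat) : bool := has (fun s => order_iso s q) (subseqs p).

Definition rectangular (p : seq nat) : bool :=
  [&& ~~ contains p [:: 2; 4; 1; 3], ~~ contains p [:: 2; 4; 3; 1],
      ~~ contains p [:: 4; 2; 1; 3] & ~~ contains p [:: 4; 2; 3; 1]].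

Definition is_perm (n : nat) (p : seq nat) : Prop := perm_eq p (iota 1 n).

Definition recoils (p : seq nat) : nat :=
  count (fun i => index i.+1 p < index i p) (iota 1 (size p).-1).

(* rho_{i,j}: increment entries >= i, insert value i at (1-based) position j *)
Definition rho (i j : nat) (p : seq nat) : seq nat :=
  let s := map (fun x => if i <= x then x.+1 else x) p in
  take j.-1 s ++ i :: drop j.-1 s.

Inductive letter := L1 | L2 | Lu | Ld.

Definition is_d (x : letter) : bool := if x is Ld then true else false.

Definition psi (x : letter) (p : seq nat) : option (seq nat) :=
  if ~~ rectangular p then None else
  match x with
  | L1 => Some (rho 1 1 p)
  | L2 => if (0 < size p) && (head 0 p != 1) then Some (rho 1 2 p) else None
  | Lu => if (0 < size p) && (head 0 p != 1) then Some (rho (head 0 p) 1 p) else None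
  | Ld => if 0 < size p then Some (rho (head 0 p).+1 1 p) else None
  end.

(* A word x_m ... x_1 is the list [:: x_m; ...; x_1]; x_1 is applied first
   to e_0 = [::]. *)
Fixpoint eval_word (w : seq letter) : option (seq nat) :=
  match w with
  | [::] => Some [::]
  | x :: w' => match eval_word w' with Some p => psi x p | None => None end
  end.

Definition in_LRect (w : seq letter) : Prop :=
  0 < size w /\ exists p, eval_word w = Some p.

From mathcomp Require Import all_boot zify.
Set Implicit Arguments. Unset Strict Implicit. Unset Printing Implicit Defensive.

(* Each psi_x puts a new value c in front of the permutation (psi_2: in second
   place) and bumps the other entries over c.  For psi_1 and psi_2, c = 1 is the
   minimum; for psi_u and psi_d, c is adjacent in value to the entry right after
   it.  Either way no occurrence of 2413, 2431, 4213, 4231 can use c, so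
   rectangularity is preserved; and recoils change only around c, with one
   recoil gained exactly for psi_d, which puts a + 1 before a.  Conversely, the
   first two entries a, b of a rectangular permutation satisfy a = 1, b = 1 or
   |a - b| = 1: otherwise 1 and min(a, b) + 1 both occur later and form a
   forbidden pattern with a and b.  These four cases tell which psi_x produced
   the permutation and from what, so every rectangular permutation has exactly
   one preimage word. *)

Lemma ltn_bump2 h i j : (bump h i < bump h j) = (i < j).
Proof. by rewrite /bump; lia. Qed.

Lemma rho1E i p : rho i 1 p = i :: map (bump i) p.
Proof.
by rewrite /rho take0 drop0; congr (_ :: _); apply: eq_map => x; rewrite /bump; case: leqP.
Qed.

Lemma rho2E i a t : rho i 2 (a :: t) = bump i a :: i :: map (bump i) t.
Proof. by rewrite -[rho _ _ _]/(_ :: rho i 1 t) rho1E /bump; case: leqP. Qed.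

Lemma mem_map_bump i u s : (bump i u \in map (bump i) s) = (u \in s).
Proof. exact/mem_map/(can_inj (bumpK i)). Qed.

Lemma notin_map_bump i s : i \notin map (bump i) s.
Proof. by apply/mapP => -[u _ /eqP]; rewrite (negbTE (neq_bump i u)). Qed.

Lemma map_unbumpK c t : c \notin t -> map (bump c) (map (unbump c) t) = t.
Proof.
move=> ct; rewrite -map_comp -[RHS]map_id; apply/eq_in_map => v vt /=.
by apply: unbumpK; apply: contraNneq ct => <-.
Qed.

Lemma is_permP n p : is_perm n p <-> uniq p /\ forall v, (v \in p) = (0 < v <= n).
Proof.
split=> [pp | [Up Mp]].
  by split=> [|v]; rewrite ?(perm_uniq pp) ?(perm_mem pp) ?iota_uniq // mem_iota; lia.
by apply: uniq_perm; rewrite ?iota_uniq // => v; rewrite Mp mem_iota; lia.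
Qed.

Lemma is_perm_size n p : is_perm n p -> size p = n.
Proof. by move/perm_size; rewrite size_iota. Qed.

Lemma is_perm_cons_bump n c p :
  is_perm n.+1 (c :: map (bump c) p) <-> 0 < c <= n.+1 /\ is_perm n p.
Proof.
rewrite !is_permP /= notin_map_bump (map_inj_uniq (can_inj (bumpK c))) /=.
split=> [[Up Mp] | [c_range [Up Mp]]].
  have c_range : 0 < c <= n.+1 by rewrite -Mp mem_head.
  split=> //; split=> // v.
  have := Mp (bump c v); rewrite in_cons eq_sym (negbTE (neq_bump c v)) mem_map_bump /= => ->.
  by rewrite /bump; lia.
split=> // v; rewrite in_cons; have [-> // | vc] := eqVneq v c.
by rewrite -{1}(unbumpK vc) mem_map_bump Mp /unbump; lia.
Qed.

Definition crossing (w x y z : nat) : bool :=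
  [|| [&& y < w, w < z & z < x], [&& z < w, w < y & y < x],
      [&& y < x, x < z & z < w] | [&& z < x, x < y & y < w]].

Lemma mem_subseqs s p : (s \in subseqs p) = subseq s p.
Proof.
elim: p s => [|x p IHp] [|y s] //=; rewrite mem_cat IHp ?sub0seq ?orbT //.
have [-> | yx] := eqVneq y x.
  have cons_inj : injective (cons x) by move=> ? ? [].
  rewrite (mem_map cons_inj) IHp.
  by apply/orP/idP => [[] // | ->]; [apply: cons_subseq | left].
suff /negbTE-> : y :: s \notin [seq x :: t | t <- subseqs p] by [].
by apply/mapP => -[t _ [yxE _]]; rewrite yxE eqxx in yx.
Qed.

Lemma rectangularP p :
  reflect (forall w x y z, subseq [:: w; x; y; z] p -> ~~ crossing w x y z)
          (rectangular p).
Proof.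
have patternsE s :
    [|| order_iso s [:: 2; 4; 1; 3], order_iso s [:: 2; 4; 3; 1],
        order_iso s [:: 4; 2; 1; 3] | order_iso s [:: 4; 2; 3; 1]]
    = if s is [:: w; x; y; z] then crossing w x y z else false.
  by case: s => [|w [|x [|y [|z [|? ?]]]]] //; rewrite /order_iso /crossing /=; lia.
rewrite /rectangular /contains -!negb_or -!has_predU.
apply: (iffP hasPn) => [no_pat w x y z sub | no_cross s].
  by have := no_pat _ (etrans (mem_subseqs _ _) sub); rewrite /= patternsE.
rewrite mem_subseqs /= patternsE.
by case: s => [|w [|x [|y [|z [|? ?]]]]] // /no_cross.
Qed.

Lemma rectangular_subseq s p : subseq s p -> rectangular p -> rectangular s.
Proof.
move=> sub /rectangularP no_cross; apply/rectangularP => w x y z sub4.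
exact/no_cross/(subseq_trans sub4).
Qed.

Lemma crossing_map f w x y z : {mono f : u v / u < v} ->
  crossing (f w) (f x) (f y) (f z) = crossing w x y z.
Proof. by move=> f_mono; rewrite /crossing !f_mono. Qed.

Lemma rectangular_map f p : {mono f : u v / u < v} ->
  rectangular (map f p) = rectangular p.
Proof.
move=> f_mono; apply/rectangularP/rectangularP => no_cross w x y z.
  by move=> /(map_subseq f) /no_cross; rewrite crossing_map.
case/subseqP => m size_m /esym; rewrite -map_mask.
case: (mask m p) (mask_subseq m p) => [|w' [|x' [|y' [|z' [|? ?]]]]] //= sub [<- <- <- <-].
by rewrite crossing_map // no_cross.
Qed.

Lemma rectangular_map_bump c p : rectangular (map (bump c) p) = rectangular p.
Proof. exact/rectangular_map/ltn_bump2. Qed.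

Lemma subseq_cons_cons (w c : nat) s t :
  subseq (w :: s) (c :: t) -> (w = c /\ subseq s t) \/ subseq (w :: s) t.
Proof. by rewrite /=; case: eqP => [->|_]; [left | right]. Qed.

Lemma rectangular_cons_min c t : {in t, forall v, c < v} ->
  rectangular t -> rectangular (c :: t).
Proof.
move=> c_min /rectangularP no_cross; apply/rectangularP => w x y z.
case/subseq_cons_cons => [[-> sub] | /no_cross //].
have cy : c < y by apply/c_min/(mem_subseq sub); rewrite !inE eqxx orbT.
have cz : c < z by apply/c_min/(mem_subseq sub); rewrite !inE eqxx !orbT.
by rewrite /crossing; lia.
Qed.

Lemma rectangular_cons2_min b c t : {in t, forall v, c < v} ->
  rectangular (b :: t) -> rectangular (b :: c :: t).
Proof.
move=> c_min rect_bt; have /rectangularP no_cross := rect_bt.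
apply/rectangularP => w x y z.
case/subseq_cons_cons => [[-> sub] | sub]; last first.
  apply: (rectangularP _ _ _ _ _ _ sub); apply: rectangular_cons_min => //.
  exact: rectangular_subseq (subseq_cons t b) rect_bt.
case/subseq_cons_cons: sub => [[-> sub] | sub]; last by apply: no_cross; rewrite /= eqxx.
have cy : c < y by apply/c_min/(mem_subseq sub); rewrite !inE eqxx.
have cz : c < z by apply/c_min/(mem_subseq sub); rewrite !inE eqxx orbT.
by rewrite /crossing; lia.
Qed.

Lemma rectangular_cons_adjacent b c t : (c == b.+1) || (b == c.+1) ->
  c \notin t -> b \notin t -> rectangular (b :: t) -> rectangular (c :: b :: t).
Proof.
move=> adj ct bt /rectangularP no_cross; apply/rectangularP => w x y z.
case/subseq_cons_cons => [[-> sub] | /no_cross //].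
case/subseq_cons_cons: sub => [[-> _] | sub]; first by rewrite /crossing; lia.
have /no_cross : subseq [:: b; x; y; z] (b :: t) by rewrite /= eqxx.
have notin_t v : v \in [:: x; y; z] -> (v != b) && (v != c).
  by move=> /(mem_subseq sub) vt; rewrite (memPn bt) ?(memPn ct).
have := notin_t x; have := notin_t y; have := notin_t z; rewrite !inE !eqxx !orbT.
by rewrite /crossing; lia.
Qed.

Lemma rectangular_cons_bump_head c a t : (c == a) || (c == a.+1) -> a \notin t ->
  rectangular (a :: t) -> rectangular (c :: map (bump c) (a :: t)).
Proof.
move=> c_adj a_notin_t rect_at; apply: rectangular_cons_adjacent.
- by rewrite /bump; lia.
- exact: notin_map_bump.
- by rewrite mem_map_bump.
- by rewrite -[bump c a :: _]/(map (bump c) (a :: t)) rectangular_map_bump.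
Qed.

Lemma subseq_pair (x y : nat) s : x \in s -> y \in s -> x != y ->
  subseq [:: x; y] s \/ subseq [:: y; x] s.
Proof.
elim: s => [|u s IHs] //; rewrite !inE => xs ys xy.
have [xu | xu] := eqVneq x u.
  by left; rewrite /= xu eqxx sub1seq; move: ys; rewrite -xu eq_sym (negbTE xy).
have [yu | yu] := eqVneq y u.
  by right; rewrite /= yu eqxx sub1seq; move: xs; rewrite (negbTE xu).
move: xs ys; rewrite (negbTE xu) (negbTE yu) => xs ys.
by case: (IHs xs ys xy) => sub; [left | right]; apply: subseq_trans sub (subseq_cons _ _).
Qed.

Lemma rectangular_head2 n a b r : is_perm n [:: a, b & r] -> rectangular [:: a, b & r] ->
  [\/ a = 1, b = 1, b = a.+1 | a = b.+1].
Proof.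
move=> /is_permP [/= /andP [] ]; rewrite inE negb_or => /andP [ab _] _ perm_mem.
move=> /rectangularP no_cross.
have a_range : 0 < a <= n by rewrite -perm_mem mem_head.
have b_range : 0 < b <= n by rewrite -perm_mem !inE eqxx orbT.
have [|] := boolP [|| a == 1, b == 1, b == a.+1 | a == b.+1].
  by case/or4P => /eqP; [constructor 1 | constructor 2 | constructor 3 | constructor 4].
rewrite !negb_or => /and4P [a1 b1 ba ab1].
set c := (minn a b).+1.
have in_r v : 0 < v <= n -> v != a -> v != b -> v \in r.
  by move=> v_range va vb; move: v_range; rewrite -perm_mem !inE (negbTE va) (negbTE vb).
have one_r : 1 \in r by apply: in_r; rewrite 1?eq_sym //; lia.
have c_r : c \in r by apply: in_r; rewrite /c; lia.
have one_c : 1 != c by rewrite /c; lia.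
have [sub | sub] := subseq_pair one_r c_r one_c.
  by have := no_cross a b 1 c; rewrite /= !eqxx => /(_ sub); rewrite /crossing /c; lia.
by have := no_cross a b c 1; rewrite /= !eqxx => /(_ sub); rewrite /crossing /c; lia.
Qed.

Fixpoint recoils_rec (s : seq nat) : nat :=
  if s is x :: s' then ((1 < x) && (x.-1 \in s')) + recoils_rec s' else 0.

Lemma recoils_rec_map_bump i s : 0 < i -> ~~ [&& 1 < i, i \in s & i.-1 \in s] ->
  recoils_rec (map (bump i) s) = recoils_rec s.
Proof.
move=> i_gt0; elim: s => //= x s IHs.
rewrite !inE => not_adj; rewrite IHs; last first.
  by apply: contra not_adj => /and3P [-> -> ->]; rewrite !orbT.
congr (_ + _); case: (ltngtP x i) => [xi | ix | xi].
- have xE : bump i x = x by rewrite /bump; lia.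
  have predE : x.-1 = bump i x.-1 by rewrite /bump; lia.
  by rewrite xE {1}predE mem_map_bump.
- have xE : bump i x = x.+1 by rewrite /bump; lia.
  have predE : x = bump i x.-1 by rewrite /bump; lia.
  rewrite xE /=.
  have -> : (x \in map (bump i) s) = (x.-1 \in s) by rewrite {1}predE mem_map_bump.
  by congr (_ && _); lia.
- subst x; have -> : bump i i = i.+1 by rewrite /bump leqnn.
  rewrite /= (negbTE (notin_map_bump i s)) andbF.
  by case: andP => // -[i_gt1 pred_in]; move: not_adj; rewrite i_gt1 pred_in eqxx !orbT.
Qed.

(* The guard [i \in s] discards values absent from s, for which [index i s] is
   the junk value [size s]. *)
Lemma count_recoils_rec M s : uniq s -> {in s, forall v, v <= M.+1} ->
  count (fun i => (i \in s) && (index i.+1 s < index i s)) (iota 1 M) = recoils_rec s.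
Proof.
elim: s => [|x s IHs] /=; first by rewrite (eq_count (a2 := pred0)) ?count_pred0.
move=> /andP [xs Us] bounded.
rewrite -IHs // => [|v vs]; last by apply: bounded; rewrite inE vs orbT.
pose new_recoil i := (i.+1 == x) && (i \in s).
pose old_recoil i := (i \in s) && (index i.+1 s < index i s).
rewrite (eq_count (a2 := predU new_recoil old_recoil)) => [|i]; last first.
  rewrite /= inE /new_recoil /old_recoil.
  have [-> | ix] := eqVneq i x; first by rewrite ltn0 (negbTE xs) !andbF.
  by case: eqVneq => [<- | _] /=; rewrite ?ltn0Sn ?ltnS ?andbT ?orbF //; case: (i \in s).
have disjoint : count (predI new_recoil old_recoil) (iota 1 M) = 0.
  rewrite (eq_count (a2 := pred0)) ?count_pred0 // => i /=.
  apply/negP => /andP [/andP [/eqP xE _] /andP [_]]; rewrite -xE in xs.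
  by rewrite (memNindex xs) ltnNge index_size.
have := count_predUI new_recoil old_recoil (iota 1 M).
rewrite disjoint addn0 => ->; congr (_ + _).
rewrite /new_recoil; have x_le : x <= M.+1 by apply: bounded; rewrite mem_head.
have [xs' | xs'] := boolP (x.-1 \in s); rewrite ?andbT ?andbF; last first.
  apply/eqP; rewrite eqn0Ngt -has_count; apply/hasP => -[i _ /andP [/eqP iE i_s]].
  by move: xs'; rewrite -iE i_s.
rewrite (eq_in_count (a2 := pred1 x.-1)) => [|i]; last first.
  rewrite mem_iota /= => i_range; apply/andP/eqP => [[/eqP <-] // | iE].
  by split; [apply/eqP; lia | rewrite iE].
by rewrite count_uniq_mem ?iota_uniq // mem_iota; lia.
Qed.

Lemma recoilsE n p : is_perm n p -> recoils p = recoils_rec p.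
Proof.
move=> /[dup] /is_perm_size <- /is_permP [Up Mp].
rewrite /recoils -(count_recoils_rec (M := (size p).-1)) => [|//|v]; last by rewrite Mp; lia.
by apply: eq_in_count => i; rewrite mem_iota Mp => i_range; rewrite (_ : 0 < i <= _) //; lia.
Qed.

Lemma psi_shape x p q : psi x p = Some q -> rectangular p /\
  match x with
  | L1 => q = 1 :: map (bump 1) p
  | L2 => exists a t, [/\ p = a :: t, a != 1 & q = bump 1 a :: 1 :: map (bump 1) t]
  | Lu => exists a t, [/\ p = a :: t, a != 1 & q = a :: map (bump a) p]
  | Ld => exists a t, p = a :: t /\ q = a.+1 :: map (bump a.+1) p
  end.
Proof.
rewrite /psi; case: (rectangular p) => //= psi_q; split=> //.
case: x psi_q => [[<-] | | | ]; first exact: rho1E.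
all: case: p => //= a t; rewrite ?andbT => //.
- by case: ifP => // a1 [<-]; exists a, t; rewrite rho2E a1.
- by case: ifP => // a1 [<-]; exists a, t; rewrite rho1E a1.
- by case=> <-; exists a, t; rewrite rho1E.
Qed.

Lemma psi_perm n x p q : is_perm n p -> psi x p = Some q -> is_perm n.+1 q.
Proof.
move=> perm_p /psi_shape [_]; have /is_permP [_ mem_p] := perm_p.
case: x => [-> | [a [t [pE _ ->]]] | [a [t [pE _ ->]]] | [a [t [pE ->]]]].
- by apply/is_perm_cons_bump.
- rewrite /is_perm (perm_catCA [:: _] [:: _]) /= -[_ :: map _ t]/(map (bump 1) (a :: t)) -pE.
  by apply/is_perm_cons_bump.
- apply/is_perm_cons_bump; split=> //.
  by have := mem_p a; rewrite pE mem_head; lia.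
- apply/is_perm_cons_bump; split=> //.
  by have := mem_p a; rewrite pE mem_head; lia.
Qed.

Lemma psi_rectangular n x p q : is_perm n p -> psi x p = Some q -> rectangular q.
Proof.
move=> /is_permP [uniq_p mem_p] /psi_shape [rect_p].
have pos_p v : v \in p -> 0 < v by rewrite mem_p; lia.
case: x => [-> | [a [t [pE _ ->]]] | [a [t [pE _ ->]]] | [a [t [pE ->]]]].
- apply: rectangular_cons_min; last by rewrite rectangular_map_bump.
  by move=> _ /mapP [v /pos_p v_gt0 ->]; rewrite /bump; lia.
- apply: rectangular_cons2_min.
  + by move=> _ /mapP [v vt ->]; have := pos_p v; rewrite pE inE vt orbT /bump; lia.
  + by rewrite -[_ :: map _ t]/(map (bump 1) (a :: t)) -pE rectangular_map_bump.
all: have /andP [a_notin_t _] : uniq (a :: t) by rewrite -pE.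
all: rewrite pE; apply: rectangular_cons_bump_head; rewrite -?pE ?eqxx ?orbT //.
Qed.

Lemma psi_recoils_rec n x p q : is_perm n p -> psi x p = Some q ->
  recoils_rec q = recoils_rec p + is_d x.
Proof.
move=> /is_permP [uniq_p mem_p] /psi_shape [_].
case: x => [-> | [a [t [pE a1 ->]]] | [a [t [pE a1 ->]]] | [a [t [pE ->]]]] /=.
- by rewrite addn0 recoils_rec_map_bump.
all: have a_gt0 : 0 < a by have := mem_p a; rewrite pE mem_head; lia.
all: have /andP [a_notin_t _] : uniq (a :: t) by rewrite -pE.
all: rewrite pE /=.
- have -> : bump 1 a = a.+1 by rewrite /bump; lia.
  have predE : a = bump 1 a.-1 by rewrite /bump; lia.
  rewrite recoils_rec_map_bump //= inE (negbTE a1).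
  have -> : (a \in map (bump 1) t) = (a.-1 \in t) by rewrite {1}predE mem_map_bump.
  have a_gt1 : 1 < a by lia.
  by rewrite a_gt1 ltnW // add0n addn0.
- have -> : bump a a = a.+1 by rewrite /bump; lia.
  have predE : a.-1 = bump a a.-1 by rewrite /bump; lia.
  rewrite /= (negbTE (notin_map_bump a t)) recoils_rec_map_bump ?(negbTE a_notin_t) ?andbF //.
  rewrite inE {2}predE mem_map_bump (_ : (a.-1 == a.+1) = false) /= ?addn0 //; lia.
- have -> : bump a.+1 a = a by rewrite /bump; lia.
  have predE : a.-1 = bump a.+1 a.-1 by rewrite /bump; lia.
  rewrite mem_head recoils_rec_map_bump ?(negbTE a_notin_t) ?andbF //.
  by rewrite {1}predE mem_map_bump andbT ltnS a_gt0 add1n addn1.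
Qed.

(* psi_d must be recognised before psi_2: psi_d (1 :: t) starts with 2, 1. *)
Definition unpsi (q : seq nat) : letter * seq nat :=
  if q is [:: a, b & r] then
    if a == 1 then (L1, map (unbump a) (b :: r))
    else if b.+1 == a then (Ld, map (unbump a) (b :: r))
    else if b == 1 then (L2, map (unbump b) (a :: r))
    else (Lu, map (unbump a) (b :: r))
  else (L1, [::]).

Lemma psiK x p q : 0 \notin p -> psi x p = Some q -> unpsi q = (x, p).
Proof.
move=> p_pos /psi_shape [_].
have bumpK_map c : map (unbump c) (map (bump c) p) = p by apply: mapK; exact: bumpK.
case: x => [-> | [a [t [pE a1 ->]]] | [a [t [pE a1 ->]]] | [a [t [pE ->]]]].
- by case: p p_pos bumpK_map => [|b r] //= _ ->.
all: have a_gt0 : 0 < a by move: p_pos; rewrite pE inE negb_or; lia.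
- rewrite /unpsi !ifN ?eqxx; try by rewrite /bump; lia.
  by rewrite -[bump 1 a :: _]/(map (bump 1) (a :: t)) -pE bumpK_map.
- rewrite [p in map _ p]pE /unpsi !ifN; try by rewrite /bump; lia.
  by rewrite -[bump a a :: _]/(map (bump a) (a :: t)) -pE bumpK_map.
- rewrite [p in map _ p]pE /unpsi ifN ?ifT; try by rewrite /bump; lia.
  by rewrite -[bump _ a :: _]/(map (bump a.+1) (a :: t)) -pE bumpK_map.
Qed.

Lemma is_perm_unbump n c t : is_perm n.+1 (c :: t) -> rectangular t ->
  [/\ is_perm n (map (unbump c) t), rectangular (map (unbump c) t)
    & map (bump c) (map (unbump c) t) = t].
Proof.
move=> perm_ct rect_t; have /is_permP [/andP [c_notin_t _] _] := perm_ct.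
have tE := map_unbumpK c_notin_t.
split=> //; last by rewrite -(rectangular_map_bump c) tE.
by move: perm_ct; rewrite -{1}tE => /is_perm_cons_bump [].
Qed.

Lemma psi_surj n q : is_perm n.+2 q -> rectangular q ->
  exists x p, is_perm n.+1 p /\ psi x p = Some q.
Proof.
case: q => [|a [|b r]] perm_q; try by have := is_perm_size perm_q.
move=> rect_q; have head2 := rectangular_head2 perm_q rect_q.
have rect_br : rectangular (b :: r) := rectangular_subseq (subseq_cons _ _) rect_q.
have [perm_p rect_p pE] := is_perm_unbump perm_q rect_br.
have [a1 | a1] := eqVneq a 1.
  exists L1, (map (unbump a) (b :: r)).
  by split=> //; rewrite /psi rect_p rho1E -a1 pE.
have [ba | ba] := eqVneq b.+1 a.
  exists Ld, (map (unbump a) (b :: r)).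
  have hE : head 0 (map (unbump a) (b :: r)) = b by rewrite /= /unbump; lia.
  by split=> //; rewrite /psi rect_p hE ba rho1E pE.
have [b1 | b1] := eqVneq b 1; last first.
  exists Lu, (map (unbump a) (b :: r)).
  have hE : head 0 (map (unbump a) (b :: r)) = a by rewrite /= /unbump; case: head2; lia.
  by split=> //; rewrite /psi rect_p hE a1 rho1E pE.
have {perm_p rect_p pE} perm_q' : is_perm n.+2 [:: 1, a & r].
  by move: perm_q; rewrite /is_perm (perm_catCA [:: 1] [:: a]) b1.
have rect_ar : rectangular (a :: r).
  by apply: rectangular_subseq rect_q; exact: (cat_subseq (subseq_refl [:: a]) (subseq_cons r b)).
have [perm_p rect_p] := is_perm_unbump perm_q' rect_ar; rewrite /= => -[aE rE].
exists L2, (map (unbump 1) (a :: r)).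
have a_gt0 : 0 < a by have /is_permP [_ /(_ a)] := perm_q; rewrite mem_head; lia.
split=> //; rewrite /psi rect_p /= ifT ?rho2E ?aE ?rE ?b1 //.
by rewrite /unbump; lia.
Qed.

Lemma eval_word_sound w p : eval_word w = Some p ->
  [/\ is_perm (size w) p, rectangular p & recoils p = count is_d w].
Proof.
elim: w p => [p [<-] | x w IHw q] /=; first by split=> //; apply/is_permP.
case E: (eval_word w) => [p|] // psi_q; have [perm_p rect_p rec_p] := IHw _ E.
have perm_q := psi_perm perm_p psi_q.
split; [by [] | exact: psi_rectangular perm_p psi_q |].
by rewrite (recoilsE perm_q) (psi_recoils_rec perm_p psi_q) -(recoilsE perm_p) rec_p addnC.
Qed.

Lemma eval_word_inj w1 w2 p : size w1 = size w2 ->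
  eval_word w1 = Some p -> eval_word w2 = Some p -> w1 = w2.
Proof.
elim: w1 w2 p => [|x w1 IHw] [|y w2] q //= [size_w].
case E1: (eval_word w1) => [p1|] //; case E2: (eval_word w2) => [p2|] // psi1 psi2.
have pos w p : eval_word w = Some p -> 0 \notin p.
  by case/eval_word_sound => /is_permP [_ ->].
move: (psiK (pos _ _ E1) psi1) (psiK (pos _ _ E2) psi2) => -> [-> p12].
by rewrite (IHw w2 p1) // E2 p12.
Qed.

Lemma eval_word_surj n p : is_perm n.+1 p -> rectangular p ->
  exists2 w, size w = n.+1 & eval_word w = Some p.
Proof.
elim: n p => [|n IHn] p perm_p rect_p.
  case: p perm_p rect_p => [|v [|? ?]] /[dup] perm_p /is_perm_size // _ _.
  have /is_permP [_ /(_ v)] := perm_p; rewrite mem_head => /esym v_range.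
  by exists [:: L1]; rewrite //= (_ : v = 1) //; lia.
have [x [p' [perm_p' psi_p]]] := psi_surj perm_p rect_p.
have [w size_w eval_w] := IHn p' perm_p' (psi_shape psi_p).1.
by exists (x :: w); rewrite /= ?size_w ?eval_w.
Qed.

Theorem corollary4p5 (n k : nat) : 1 <= n ->
  (* maps into the target set *)
  (forall w, in_LRect w -> size w = n -> count is_d w = k ->
     exists p, eval_word w = Some p /\ is_perm n p /\ rectangular p /\ recoils p = k) /\
  (* injective on the source set *)
  (forall w1 w2, in_LRect w1 -> size w1 = n -> count is_d w1 = k ->
     in_LRect w2 -> size w2 = n -> count is_d w2 = k ->
     eval_word w1 = eval_word w2 -> w1 = w2) /\
  (* surjective onto the target set *)
  (forall p, is_perm n p -> rectangular p -> recoils p = k ->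
     exists w, [/\ in_LRect w, size w = n, count is_d w = k & eval_word w = Some p]).
Proof.
move=> n_gt0; split; [|split].
- move=> w [_ [p eval_w]] <- <-; exists p.
  by have [] := eval_word_sound eval_w.
- move=> w1 w2 [_ [p eval_w1]] size_w1 _ _ size_w2 _ eval_w.
  by apply: (eval_word_inj _ eval_w1); rewrite ?size_w1 ?size_w2 -?eval_w.
- case: n n_gt0 => // n _ p perm_p rect_p rec_p.
  have [w size_w eval_w] := eval_word_surj perm_p rect_p.
  have [_ _ rec_w] := eval_word_sound eval_w.
  by exists w; split=> //; [split; [rewrite size_w | exists p] | rewrite -rec_w].
Qed.
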